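(* Let $0<a\le 1$, $b=2-a$, $\tfrac12<c_1<1$, and let $(k_a(t),k_b(t))$ be the Markov chain $K$ described in the context, started from any state with $k_a+k_b\ge 2c_1 n$. Let $\tau_a$ be the first time with $k_a=n$. Then there is a constant $C$ depending only on $a,c_1$ such that $$\mathbb{E}\,\tau_a\le \frac{n}{a(2c_1-1)}\log\big((2c_1-1)n\big)+Cn .$$
   Context: The chain $K$ (it records the numbers $k_a,k_b$ of marked $a$-cards and marked $b$-cards in the second marking phase of a biased transposition shuffle of $N=2n$ cards, $n$ of each type). Its states are pairs $(k_a,k_b)$ of integers with $0\le k_a,k_b\le n$ and $k_a+k_b\ge n$. From $(k_a,k_b)$ it moves to $(k_a,k_b+1)$ with probability $\frac{2ab(n-k_b)(k_a+k_b+1)}{(2n)^2}$; to $(k_a+1,k_b)$ with probability $\frac{2a^2(n-k_a)(k_a+k_b+1)}{(2n)^2}$; to $(k_a+1,k_b-1)$ with probability $\frac{2a(b-a)(n-k_a)k_b}{(2n)^2}$; and otherwise stays put. *)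

From Stdlib Require Import Reals Arith.
Open Scope R_scope.

(* Chain K for N = 2n cards, parameters a and b = 2 - a.
   States: pairs (ka, kb) of naturals. *)

Definition b_of (a : R) : R := 2 - a.

(* probability of moving (ka,kb) -> (ka, kb+1) *)
Definition pK_b (a : R) (n ka kb : nat) : R :=
  2 * a * b_of a * (INR n - INR kb) * (INR ka + INR kb + 1) / (2 * INR n) ^ 2.
(* probability of moving (ka,kb) -> (ka+1, kb) *)
Definition pK_a (a : R) (n ka kb : nat) : R :=
  2 * a ^ 2 * (INR n - INR ka) * (INR ka + INR kb + 1) / (2 * INR n) ^ 2.
(* probability of moving (ka,kb) -> (ka+1, kb-1) *)
Definition pK_ab (a : R) (n ka kb : nat) : R :=
  2 * a * (b_of a - a) * (INR n - INR ka) * INR kb / (2 * INR n) ^ 2.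
Definition pK_stay (a : R) (n ka kb : nat) : R :=
  1 - pK_b a n ka kb - pK_a a n ka kb - pK_ab a n ka kb.

Definition is_state (n ka kb : nat) : Prop :=
  (ka <= n)%nat /\ (kb <= n)%nat /\ (n <= ka + kb)%nat.

(* surv a n t ka kb = P_(ka,kb)(tau_a > t), where tau_a = first time t >= 0
   with k_a(t) = n.  Computed by the standard backward recursion. *)
Fixpoint surv (a : R) (n : nat) (t : nat) (ka kb : nat) : R :=
  if Nat.eqb ka n then 0 else
  match t with
  | O => 1
  | S t' =>
      pK_b a n ka kb * surv a n t' ka (S kb)
    + pK_a a n ka kb * surv a n t' (S ka) kb
    + pK_ab a n ka kb * surv a n t' (S ka) (Nat.pred kb)
    + pK_stay a n ka kb * surv a n t' ka kb
  end.

(* Partial sums sum_{t < T} P(tau_a > t); E tau_a = sup_T of these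
   (tail-sum formula), so "E tau_a <= B" iff all partial sums are <= B. *)
Fixpoint tau_partial (a : R) (n T ka kb : nat) : R :=
  match T with
  | O => 0
  | S T' => tau_partial a n T' ka kb + surv a n T' ka kb
  end.

Definition expected_tau_le (a : R) (n ka kb : nat) (B : R) : Prop :=
  forall T : nat, tau_partial a n T ka kb <= B.

From Stdlib Require Import Reals Arith Lra Lia.
Open Scope R_scope.

(* The potential V(k_a) = n / (a (2 c_1 - 1)) * (1 + ln (n - k_a)), with V(n) = 0, is
   superharmonic with drift -1 on the region k_a + k_b >= 2 c_1 n.  The region is closed:
   no move decreases k_a + k_b.  There, k_a increases with probability at least
   a (2 c_1 - 1) (n - k_a) / n, and each such move lowers V by at least
   n / (a (2 c_1 - 1) (n - k_a)) since ln (m - 1) <= ln m - 1/m.  Hence the partial sums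
   of P(tau_a > t) stay below V(k_a) <= n / (a (2 c_1 - 1)) * (1 + ln n), which is the
   bound with C = (1 - ln (2 c_1 - 1)) / (a (2 c_1 - 1)). *)

Lemma ln_le_sub1 (y : R) : 0 < y -> ln y <= y - 1.
Proof.
  intro Hy; destruct (Rle_or_lt (ln y) (y - 1)) as [Hle|Hlt]; [exact Hle|].
  pose proof (exp_increasing _ _ Hlt) as Hexp; rewrite exp_ln in Hexp by exact Hy.
  pose proof (exp_ineq1_le (y - 1)); lra.
Qed.

Lemma ln_le_compat (x y : R) : 0 < x -> x <= y -> ln x <= ln y.
Proof.
  intros Hx [Hlt|Heq]; [left; apply ln_increasing; lra | rewrite Heq; lra].
Qed.

Lemma ln_ge0 (x : R) : 1 <= x -> 0 <= ln x.
Proof. intro Hx; rewrite <- ln_1; apply ln_le_compat; lra. Qed.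

Lemma ln_sub1_le (m : R) : 1 < m -> ln (m - 1) <= ln m - / m.
Proof.
  intro Hm.
  assert (Hq : ln ((m - 1) / m) <= (m - 1) / m - 1)
    by (apply ln_le_sub1, Rdiv_lt_0_compat; lra).
  unfold Rdiv in Hq; rewrite ln_mult, ln_Rinv in Hq by (try apply Rinv_0_lt_compat; lra).
  replace ((m - 1) * / m - 1) with (- / m) in Hq by (field; lra).
  lra.
Qed.

Lemma tau_partial_S (a : R) (n T ka kb : nat) :
  tau_partial a n (S T) ka kb =
  if Nat.eqb ka n then 0 else
    1 + pK_b a n ka kb * tau_partial a n T ka (S kb)
      + pK_a a n ka kb * tau_partial a n T (S ka) kb
      + pK_ab a n ka kb * tau_partial a n T (S ka) (Nat.pred kb)
      + pK_stay a n ka kb * tau_partial a n T ka kb.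
Proof.
  revert ka kb; induction T as [|T IH]; intros ka kb.
  - simpl; destruct (Nat.eqb ka n); ring.
  - change (tau_partial a n (S (S T)) ka kb)
      with (tau_partial a n (S T) ka kb + surv a n (S T) ka kb).
    rewrite IH at 1; simpl (surv a n (S T) ka kb); cbn [tau_partial].
    destruct (Nat.eqb ka n); ring.
Qed.

Lemma Rle_div_r (x y z : R) : 0 < y -> x * y <= z -> x <= z / y.
Proof.
  intros Hy Hxy; replace x with (x * y / y) by (field; lra).
  apply Rmult_le_compat_r; [left; apply Rinv_0_lt_compat|]; lra.
Qed.

Lemma INR_lt_succ (m n : nat) : (m < n)%nat -> INR m + 1 <= INR n.
Proof. intro H; rewrite <- S_INR; apply le_INR; exact H. Qed.

Definition log_potential (K : R) (n ka : nat) : R :=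
  if Nat.eqb ka n then 0 else K * (1 + ln (INR n - INR ka)).

Lemma log_potential_ge0 K n ka : 0 <= K -> (ka <= n)%nat -> 0 <= log_potential K n ka.
Proof.
  intros HK Hka; unfold log_potential; destruct (Nat.eqb_spec ka n) as [|Hne]; [lra|].
  assert (Hx : INR ka + 1 <= INR n) by (apply INR_lt_succ; lia).
  pose proof (ln_ge0 (INR n - INR ka) ltac:(lra)).
  apply Rmult_le_pos; lra.
Qed.

Lemma log_potential_le K n ka : 0 <= K -> (1 <= n)%nat -> (ka <= n)%nat ->
  log_potential K n ka <= K * (1 + ln (INR n)).
Proof.
  intros HK Hn Hka; assert (HN : 1 <= INR n) by (apply (le_INR 1); exact Hn).
  pose proof (ln_ge0 _ HN); unfold log_potential.
  destruct (Nat.eqb_spec ka n) as [|Hne]; [apply Rmult_le_pos; lra|].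
  apply Rmult_le_compat_l; [exact HK|].
  assert (Hx : INR ka + 1 <= INR n) by (apply INR_lt_succ; lia).
  pose proof (pos_INR ka).
  pose proof (ln_le_compat (INR n - INR ka) (INR n) ltac:(lra) ltac:(lra)); lra.
Qed.

Lemma log_potential_S K n ka : 0 <= K -> (ka < n)%nat ->
  log_potential K n (S ka) <= log_potential K n ka - K / (INR n - INR ka).
Proof.
  intros HK Hka; unfold log_potential.
  destruct (Nat.eqb_spec ka n) as [|_]; [lia|].
  rewrite S_INR; destruct (Nat.eqb_spec (S ka) n) as [<-|Hne].
  - rewrite S_INR; replace (INR ka + 1 - INR ka) with 1 by ring.
    rewrite ln_1; unfold Rdiv; lra.
  - assert (Hx : INR ka + 2 <= INR n)
      by (replace 2 with (INR 2) by reflexivity; rewrite <- plus_INR; apply le_INR; lia).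
    pose proof (ln_sub1_le (INR n - INR ka) ltac:(lra)) as Hln.
    replace (INR n - (INR ka + 1)) with (INR n - INR ka - 1) by ring.
    replace (K * (1 + ln (INR n - INR ka)) - K / (INR n - INR ka))
      with (K * (1 + (ln (INR n - INR ka) - / (INR n - INR ka)))) by (field; lra).
    apply Rmult_le_compat_l; lra.
Qed.

Section ChainK.
Variables (a c1 : R) (n : nat).
Hypotheses (ha : 0 < a <= 1) (hc : 1/2 < c1 < 1) (hn : (1 <= n)%nat).

Lemma INR_n_ge1 : 1 <= INR n.
Proof. apply (le_INR 1); exact hn. Qed.

Lemma div_pK_den_ge0 x : 0 <= x -> 0 <= x / (2 * INR n) ^ 2.
Proof.
  intro Hx; pose proof INR_n_ge1; apply Rmult_le_pos; [exact Hx|].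
  left; apply Rinv_0_lt_compat, pow_lt; lra.
Qed.

Lemma pK_b_ge0 ka kb : (kb <= n)%nat -> 0 <= pK_b a n ka kb.
Proof.
  intro Hkb; apply le_INR in Hkb; pose proof (pos_INR ka); pose proof (pos_INR kb).
  unfold pK_b, b_of; apply div_pK_den_ge0.
  repeat apply Rmult_le_pos; lra.
Qed.

Lemma pK_a_ge0 ka kb : (ka <= n)%nat -> 0 <= pK_a a n ka kb.
Proof.
  intro Hka; apply le_INR in Hka; pose proof (pos_INR ka); pose proof (pos_INR kb).
  unfold pK_a; apply div_pK_den_ge0.
  repeat apply Rmult_le_pos; nra.
Qed.

Lemma pK_ab_ge0 ka kb : (ka <= n)%nat -> 0 <= pK_ab a n ka kb.
Proof.
  intro Hka; apply le_INR in Hka; pose proof (pos_INR kb).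
  unfold pK_ab, b_of; apply div_pK_den_ge0.
  repeat apply Rmult_le_pos; lra.
Qed.

Lemma pK_stay_ge0 ka kb : is_state n ka kb -> 0 <= pK_stay a n ka kb.
Proof.
  intros [Hka [Hkb Hs]]; apply le_INR in Hka, Hkb, Hs; rewrite plus_INR in Hs.
  pose proof INR_n_ge1; pose proof (pos_INR kb).
  unfold pK_stay, pK_b, pK_a, pK_ab, b_of.
  set (N := INR n) in *; set (x := INR ka) in *; set (y := INR kb) in *.
  assert (HN : 0 < (2 * N) ^ 2) by (apply pow_lt; lra).
  assert (Hnum : 2 * a * (2 - a) * (N - y) * (x + y + 1) + 2 * a ^ 2 * (N - x) * (x + y + 1)
                 + 2 * a * (2 - a - a) * (N - x) * y <= (2 * N) ^ 2).
  { assert (Hy : (2 - a - a) * (N - x) * y <= (2 - a - a) * (N - x) * (x + y + 1))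
      by (apply Rmult_le_compat_l; [apply Rmult_le_pos|]; lra).
    assert (Hs1 : 0 <= (x + y + 1) * (2 * N - (x + y))) by (apply Rmult_le_pos; lra).
    assert (Hab : a * (2 - a) <= 1) by nra.
    assert (Hquad : 2 * (x + y + 1) * (2 * N - (x + y)) <= (2 * N) ^ 2) by nra.
    nra. }
  apply Rmult_le_compat_r with (r := / (2 * N) ^ 2) in Hnum;
    [|left; apply Rinv_0_lt_compat; lra].
  rewrite Rinv_r in Hnum by lra.
  unfold Rdiv; lra.
Qed.

Lemma pK_drift ka kb : is_state n ka kb -> 2 * c1 * INR n <= INR ka + INR kb ->
  a * (2 * c1 - 1) * (INR n - INR ka) <= INR n * (pK_a a n ka kb + pK_ab a n ka kb).
Proof.
  intros [Hka [Hkb Hs]] Hc; apply le_INR in Hka, Hkb, Hs; rewrite plus_INR in Hs.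
  pose proof INR_n_ge1; pose proof (pos_INR ka); pose proof (pos_INR kb).
  unfold pK_a, pK_ab, b_of.
  set (N := INR n) in *; set (x := INR ka) in *; set (y := INR kb) in *.
  replace (N * (2 * a ^ 2 * (N - x) * (x + y + 1) / (2 * N) ^ 2
                + 2 * a * (2 - a - a) * (N - x) * y / (2 * N) ^ 2))
    with (a * (N - x) * ((a * (x + y + 1) + (2 - 2 * a) * y) / (2 * N))) by (field; lra).
  replace (a * (2 * c1 - 1) * (N - x)) with (a * (N - x) * (2 * c1 - 1)) by ring.
  apply Rmult_le_compat_l; [apply Rmult_le_pos; lra|].
  (* [y >= x + y - N] and [x + y >= 2 c1 N] *)
  assert (Hnum : 2 * N * (2 * c1 - 1) <= a * (x + y + 1) + (2 - 2 * a) * y) by nra.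
  apply Rle_div_r; lra.
Qed.

Let V := log_potential (INR n / (a * (2 * c1 - 1))) n.

Lemma potential_constant_ge0 : 0 <= INR n / (a * (2 * c1 - 1)).
Proof.
  pose proof INR_n_ge1; apply Rmult_le_pos; [lra|].
  left; apply Rinv_0_lt_compat, Rmult_lt_0_compat; lra.
Qed.

Lemma potential_superharmonic ka kb : is_state n ka kb -> (ka < n)%nat ->
  2 * c1 * INR n <= INR ka + INR kb ->
  1 + pK_b a n ka kb * V ka + pK_a a n ka kb * V (S ka) + pK_ab a n ka kb * V (S ka)
    + pK_stay a n ka kb * V ka <= V ka.
Proof.
  intros Hst Hka Hc.
  pose proof (pK_drift ka kb Hst Hc) as Hdrift.
  pose proof (log_potential_S _ n ka potential_constant_ge0 Hka) as Hstep; fold V in Hstep.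
  pose proof (pK_a_ge0 ka kb (proj1 Hst)); pose proof (pK_ab_ge0 ka kb (proj1 Hst)).
  assert (Hx : INR ka + 1 <= INR n) by (apply INR_lt_succ; exact Hka).
  assert (Hd : 0 < a * (2 * c1 - 1)) by (apply Rmult_lt_0_compat; lra).
  set (p := pK_a a n ka kb + pK_ab a n ka kb) in *.
  assert (Hgain : 1 <= p * (INR n / (a * (2 * c1 - 1)) / (INR n - INR ka))).
  { replace (p * (INR n / (a * (2 * c1 - 1)) / (INR n - INR ka)))
      with (INR n * p / (a * (2 * c1 - 1) * (INR n - INR ka))) by (field; lra).
    apply Rle_div_r; [apply Rmult_lt_0_compat|]; lra. }
  assert (Hdec : p * V (S ka) <= p * (V ka - INR n / (a * (2 * c1 - 1)) / (INR n - INR ka)))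
    by (apply Rmult_le_compat_l; unfold p; lra).
  unfold pK_stay; unfold p in *; nra.
Qed.

Lemma tau_partial_le_potential T : forall ka kb, is_state n ka kb ->
  2 * c1 * INR n <= INR ka + INR kb -> tau_partial a n T ka kb <= V ka.
Proof.
  induction T as [|T IH]; intros ka kb Hst Hc.
  { apply log_potential_ge0; [apply potential_constant_ge0 | apply Hst]. }
  rewrite tau_partial_S; destruct (Nat.eqb_spec ka n) as [|Hne].
  { apply log_potential_ge0; [apply potential_constant_ge0 | apply Hst]. }
  pose proof Hst as [Hka [Hkb Hs]].
  assert (Hlt : (ka < n)%nat) by lia.
  pose proof (pK_a_ge0 ka kb Hka); pose proof (pK_ab_ge0 ka kb Hka).
  pose proof (pK_stay_ge0 ka kb Hst).
  (* the only move leaving the state space, [k_b = n] to [n + 1], has probability 0 *)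
  assert (Hb : pK_b a n ka kb * tau_partial a n T ka (S kb) <= pK_b a n ka kb * V ka).
  { destruct (Nat.eq_dec kb n) as [->|Hkbn].
    - unfold pK_b; rewrite Rminus_diag; lra.
    - apply Rmult_le_compat_l; [apply pK_b_ge0; exact Hkb|].
      apply IH; [unfold is_state; lia | rewrite S_INR; lra]. }
  assert (Ha : tau_partial a n T (S ka) kb <= V (S ka))
    by (apply IH; [unfold is_state; lia | rewrite S_INR; lra]).
  assert (Hab : tau_partial a n T (S ka) (Nat.pred kb) <= V (S ka)).
  { apply IH; [unfold is_state; lia|].
    replace (INR (S ka) + INR (Nat.pred kb)) with (INR ka + INR kb); [lra|].
    rewrite <- !plus_INR; f_equal; lia. }
  assert (Hstay : tau_partial a n T ka kb <= V ka) by (apply IH; assumption).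
  pose proof (potential_superharmonic ka kb Hst Hlt Hc).
  nra.
Qed.

End ChainK.

Theorem mainTheorem4 (a c1 : R) (ha : 0 < a <= 1) (hc : 1/2 < c1 < 1) :
  exists C : R, forall (n ka kb : nat),
    (1 <= n)%nat ->
    is_state n ka kb ->
    2 * c1 * INR n <= INR ka + INR kb ->
    expected_tau_le a n ka kb
      (INR n / (a * (2 * c1 - 1)) * ln ((2 * c1 - 1) * INR n) + C * INR n).
Proof.
  exists ((1 - ln (2 * c1 - 1)) / (a * (2 * c1 - 1))).
  intros n ka kb hn Hst Hc T.
  assert (HN : 1 <= INR n) by (apply (le_INR 1); exact hn).
  assert (Hd : 0 < a * (2 * c1 - 1)) by (apply Rmult_lt_0_compat; lra).
  replace (INR n / (a * (2 * c1 - 1)) * ln ((2 * c1 - 1) * INR n)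
           + (1 - ln (2 * c1 - 1)) / (a * (2 * c1 - 1)) * INR n)
    with (INR n / (a * (2 * c1 - 1)) * (1 + ln (INR n)))
    by (rewrite ln_mult by lra; field; lra).
  eapply Rle_trans; [exact (tau_partial_le_potential a c1 n ha hc hn T ka kb Hst Hc)|].
  apply log_potential_le; [apply potential_constant_ge0; assumption | exact hn | apply Hst].
Qed.
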